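(* For every probabilistic single-item auction (with $n$ bidders and $m$ types), there exists a mixed signaling scheme maximizing the expected revenue among all mixed signaling schemes that uses at most $m+\min\{\binom{n}{2},\binom{m}{2}\}$ signals.
   Context: A probabilistic single-item auction consists of $n\ge 2$ bidders, $m$ item types, a probability distribution $(p_1,\dots,p_m)$ over types, and nonnegative valuations $v_{i,j}$ (value of bidder $i$ for an item of type $j$). The auctioneer observes the realized type and broadcasts a signal; bidders then participate in a second-price auction, each bidding their expected valuation conditional on the signal. A mixed signaling scheme is a finite set $\mathcal{S}$ of signals and a map $\varphi:[m]\times\mathcal{S}\to[0,1]$ with $\sum_{S\in\mathcal{S}}\varphi(j,S)=1$ for every type $j$. Writing $\psi_{i,j}=p_jv_{i,j}$ and $\mathrm{max2}$ for the second-largest entry of a list (with multiplicity), the expected revenue of $\varphi$ is $\sum_{S\in\mathcal{S}}\mathrm{max2}_i\big\{\sum_j \psi_{i,j}\varphi(j,S)\big\}$. *)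

From mathcomp Require Import all_boot all_order all_algebra.
From mathcomp Require Import reals.
Set Implicit Arguments. Unset Strict Implicit. Unset Printing Implicit Defensive.
Import Order.TTheory GRing.Theory Num.Theory.
Local Open Scope ring_scope.

Definition max2 {R : realType} {n : nat} (x : 'I_n -> R) : R :=
  nth 0 (sort (fun a b : R => b <= a) [seq x i | i <- enum 'I_n]) 1.

(* A mixed signaling scheme with k signals (signal set 'I_k):
   phi j s = probability of sending signal s when the type is j. *)
Definition is_scheme {R : realType} {m k : nat} (phi : 'I_m -> 'I_k -> R) : Prop :=
  (forall j s, 0 <= phi j s <= 1) /\ (forall j, \sum_(s < k) phi j s = 1).

Definition revenue {R : realType} {n m k : nat}
  (p : 'I_m -> R) (v : 'I_n -> 'I_m -> R) (phi : 'I_m -> 'I_k -> R) : R :=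
  \sum_(s < k) max2 (fun i : 'I_n => \sum_(j < m) (p j * v i j) * phi j s).

From mathcomp Require Import all_boot all_order all_algebra.
From mathcomp Require Import reals lra.
From mathcomp Require Import boolp classical_sets topology normedtype derive.
Set Implicit Arguments. Unset Strict Implicit. Unset Printing Implicit Defensive.
Import Order.TTheory GRing.Theory Num.Theory.
Import numFieldNormedType.Exports.
Local Open Scope ring_scope.

(* The revenue of a scheme is a sum over signals of F(x_s), where x_s is the
   column of the scheme for signal s and F x = max2_i \sum_j psi_{i,j} x_j is
   positively homogeneous.  If there are more than m signals the columns satisfy
   a nontrivial linear relation \sum_s c_s x_s = 0; rescaling column s by
   1 - t c_s keeps the scheme constraints and changes the revenue linearly in t,
   so t can be pushed until a column vanishes without losing revenue.  Hence
   every scheme is dominated by one with exactly m signals.  Those form a compact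
   set on which the revenue is continuous (max2 is 1-Lipschitz), so an optimal
   scheme with m signals exists. *)

Section SecondMax.
Variables (R : realType) (n : nat).
Implicit Type x y : 'I_n -> R.

Lemma eq_max2 x y : x =1 y -> max2 x = max2 y.
Proof. by move=> exy; rewrite /max2; congr nth; congr sort; apply: eq_map. Qed.

Hypothesis n_ge2 : (2 <= n)%N.

Lemma max2P x : exists i0 i1, [/\ i0 != i1, max2 x = x i1, x i1 <= x i0 &
  forall k, k != i0 -> x k <= x i1].
Proof.
pose r := relpre x (fun a b : R => b <= a).
pose s := sort r (enum 'I_n).
have r_total : total r by move=> a b; rewrite /r /= le_total.
have r_trans : transitive r by move=> a b c /= h1 h2; exact: le_trans h2 h1.
have r_refl : reflexive r by move=> a; rewrite /r /= lexx.
have s_sorted : sorted r s := sort_sorted r_total _.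
have size_s : size s = n by rewrite size_sort size_enum_ord.
have s_uniq : uniq s by rewrite sort_uniq enum_uniq.
have s_gt1 : (1 < size s)%N by rewrite size_s.
have i0 : 'I_n by exists 0%N; apply: leq_trans n_ge2.
exists (nth i0 s 0), (nth i0 s 1); split.
- by rewrite nth_uniq // ltnW.
- by rewrite /max2 sort_map (nth_map i0) ?size_sort ?size_enum_ord.
- exact: (sorted_leq_nth r_trans r_refl i0 s_sorted) (ltnW s_gt1) s_gt1 (leq0n 1).
- move=> k; have /(nthP i0) [t t_lt <-] : k \in s by rewrite mem_sort mem_enum.
  have [->|t_neq0] := eqVneq t 0%N; first by rewrite eqxx.
  move=> _; have t_ge1 : (1 <= t)%N by rewrite lt0n.
  exact: (sorted_leq_nth r_trans r_refl i0 s_sorted) s_gt1 t_lt t_ge1.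
Qed.

Lemma max2_eq x a b : a != b -> x b <= x a -> (forall k, k != a -> x k <= x b) ->
  max2 x = x b.
Proof.
move=> ab ba below_b; have [i0 [i1 [i01 -> i10 below_i1]]] := max2P x.
apply/le_anti/andP; split.
- have [e|ne] := eqVneq i1 a; last exact: below_b.
  by rewrite e in i01 i10 *; exact: le_trans i10 (below_b _ i01).
- have [e|ne] := eqVneq b i0; last exact: below_i1.
  by rewrite e in ab ba *; exact: le_trans ba (below_i1 _ ab).
Qed.

Lemma max2_scale x l : 0 <= l -> max2 (fun i => l * x i) = l * max2 x.
Proof.
move=> l_ge0; have [i0 [i1 [i01 -> i10 below_i1]]] := max2P x.
apply: (max2_eq (x := fun i => l * x i) i01); first by rewrite ler_wpM2l.
by move=> k k_neq; rewrite ler_wpM2l // below_i1.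
Qed.

(* Among any two indices one is not the top index of [y], so some entry of [x]
   that is at least [max2 x] is dominated by [max2 y]. *)
Lemma max2_lipschitz x y d :
  (forall i, `|x i - y i| <= d) -> `|max2 x - max2 y| <= d.
Proof.
have half x' y' : (forall i, `|x' i - y' i| <= d) -> max2 x' - d <= max2 y'.
  move=> dxy; have [i0 [i1 [i01 -> i10 _]]] := max2P x'.
  have [j0 [j1 [_ -> _ below_j1]]] := max2P y'.
  have [k [k_neq le_k]] : exists k, k != j0 /\ x' i1 <= x' k.
    have [e|ne] := eqVneq i1 j0; last by exists i1; split.
    by exists i0; rewrite -e; split.
  apply: le_trans (below_j1 _ k_neq).
  by have := dxy k; rewrite ler_norml => /andP[_ le_d]; lra.
move=> dxy; have h1 := half x y dxy.
have h2 : max2 y - d <= max2 x by apply: half => i; rewrite distrC.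
by rewrite ler_norml; apply/andP; split; lra.
Qed.

End SecondMax.

Lemma eq_is_scheme (R : realType) m k (phi phi' : 'I_m -> 'I_k -> R) :
  (forall j s, phi j s = phi' j s) -> is_scheme phi -> is_scheme phi'.
Proof.
move=> e [bounds rows]; split => [j s|j]; first by rewrite -e.
by rewrite -(rows j); apply: eq_bigr => s _; rewrite e.
Qed.

Lemma nonneg_rows_is_scheme (R : realType) m k (phi : 'I_m -> 'I_k -> R) :
  (forall j s, 0 <= phi j s) -> (forall j, \sum_s phi j s = 1) -> is_scheme phi.
Proof.
move=> ge0 rows; split => // j s; rewrite ge0 -(rows j) (bigD1 s) //= lerDl.
exact: sumr_ge0.
Qed.

Lemma exists_linear_relation (F : fieldType) m k (x : 'I_k -> 'I_m -> F) :
  (m < k)%N -> exists c : 'I_k -> F,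
    (exists s, c s != 0) /\ forall j, \sum_s c s * x s j = 0.
Proof.
move=> m_lt_k; pose A := \matrix_(s, j) x s j.
have : kermx A != 0.
  rewrite kermx_eq0 /row_free; apply: contraTneq m_lt_k => <-.
  by rewrite -leqNgt rank_leq_col.
case/matrix0Pn => i [s kerA_is]; exists (kermx A i); split; first by exists s.
move=> j; have := congr1 (fun M : 'M_(k, m) => M i j) (mulmx_ker A).
rewrite !mxE => kerA_ij.
by rewrite -[RHS]kerA_ij; apply: eq_bigr => t _; rewrite [A _ _]mxE.
Qed.

Lemma linear_relation_pos_coef (R : realDomainType) m k (x : 'I_m -> 'I_k -> R)
    (c : 'I_k -> R) :
  (forall j s, 0 <= x j s) -> (forall s, exists j, x j s != 0) ->
  (exists s, c s != 0) -> (forall j, \sum_s c s * x j s = 0) ->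
  exists s, 0 < c s.
Proof.
move=> x_ge0 x_neq0 [s1 cs1] rel; apply/existsP; apply: contraT.
rewrite negb_exists => /forallP c_le0.
have [j xjs1] := x_neq0 s1.
have /eqP : \sum_s - (c s * x j s) = 0 by rewrite sumrN rel oppr0.
rewrite psumr_eq0 => [/allP/(_ s1 (mem_index_enum _))|s _].
  by rewrite oppr_eq0 mulf_eq0 (negbTE cs1) (negbTE xjs1).
by rewrite oppr_ge0 mulr_le0_ge0 // leNgt c_le0.
Qed.

Section Reduction.
Variables (R : realType) (n m : nat).
Hypothesis n_ge2 : (2 <= n)%N.
Variables (p : 'I_m -> R) (v : 'I_n -> 'I_m -> R).

Definition signal_revenue (x : 'I_m -> R) :=
  max2 (fun i => \sum_j (p j * v i j) * x j).

Lemma eq_signal_revenue x y : x =1 y -> signal_revenue x = signal_revenue y.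
Proof. by move=> exy; apply: eq_max2 => i; apply: eq_bigr => j _; rewrite exy. Qed.

Lemma signal_revenue_scale x l :
  0 <= l -> signal_revenue (fun j => l * x j) = l * signal_revenue x.
Proof.
move=> l_ge0; rewrite /signal_revenue -max2_scale //; apply: eq_max2 => i.
by rewrite mulr_sumr; apply: eq_bigr => j _; rewrite mulrCA.
Qed.

Lemma signal_revenue0 x : x =1 (fun=> 0) -> signal_revenue x = 0.
Proof.
move=> x0; rewrite (@eq_signal_revenue _ (fun j => 0 * x j)) => [|j].
  by rewrite signal_revenue_scale // mul0r.
by rewrite x0 mul0r.
Qed.

Lemma revenueE k (phi : 'I_m -> 'I_k -> R) :
  revenue p v phi = \sum_s signal_revenue (phi^~ s).
Proof. by []. Qed.

Lemma eq_revenue k (phi phi' : 'I_m -> 'I_k -> R) :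
  (forall j s, phi j s = phi' j s) -> revenue p v phi = revenue p v phi'.
Proof.
by move=> e; rewrite !revenueE; apply: eq_bigr => s _; apply: eq_signal_revenue.
Qed.

Lemma drop_null_signal k (phi : 'I_m -> 'I_k.+1 -> R) s0 :
  is_scheme phi -> (forall j, phi j s0 = 0) ->
  is_scheme (fun j s => phi j (lift s0 s)) /\
  revenue p v (fun j s => phi j (lift s0 s)) = revenue p v phi.
Proof.
move=> [bounds rows] null; split; first split => [j s|j]; first exact: bounds.
  by rewrite -(rows j) (bigD1_ord s0) //= null add0r.
by rewrite [RHS]revenueE (bigD1_ord s0) //= signal_revenue0 ?add0r.
Qed.

Lemma pad_scheme k (phi : 'I_m -> 'I_k -> R) : (k <= m)%N -> is_scheme phi ->
  exists phi' : 'I_m -> 'I_m -> R,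
    is_scheme phi' /\ revenue p v phi' = revenue p v phi.
Proof.
move=> k_le_m [bounds rows].
pose col (i : nat) j := if insub i is Some s then phi j s else 0.
have colE j (s : 'I_k) : col s j = phi j s by rewrite /col valK.
have col0 j i : (k <= i)%N -> col i j = 0.
  by move=> k_le_i; rewrite /col insubN // -leqNgt.
have widen (F : nat -> R) : (forall i, (k <= i)%N -> F i = 0) ->
    \sum_(s < m) F s = \sum_(s < k) F s.
  move=> F0; rewrite (big_ord_widen m F k_le_m) [RHS]big_mkcond.
  by apply: eq_bigr => s _; case: ltnP => // /F0.
exists (fun j (s : 'I_m) => col s j); split; first split => [j s|j].
- by rewrite /col; case: insub => [s'|]; rewrite ?bounds ?lexx ?ler01.
- by rewrite (widen (col^~ j)) => [|i /col0 //]; under eq_bigr do rewrite colE.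
rewrite !revenueE (widen (fun i => signal_revenue (col i))) => [|i ki].
  by apply: eq_bigr => s _; apply: eq_signal_revenue => j; rewrite colE.
by rewrite signal_revenue0 // => j; rewrite col0.
Qed.

(* Along a linear relation [c] between the signal columns the scheme can be
   rescaled by [1 - t c s]; the revenue changes linearly in [t], and [t = 1 / c s0]
   kills signal [s0]. *)
Lemma shift_along_relation k (phi : 'I_m -> 'I_k -> R) (c : 'I_k -> R) s0 :
  is_scheme phi -> (forall j, \sum_s c s * phi j s = 0) ->
  0 < c s0 -> (forall s, c s <= c s0) ->
  \sum_s c s * signal_revenue (phi^~ s) <= 0 ->
  exists phi' : 'I_m -> 'I_k -> R,
    [/\ is_scheme phi', forall j, phi' j s0 = 0 &
         revenue p v phi <= revenue p v phi'].
Proof.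
move=> [bounds rows] rel cs0_gt0 cs0_max sig_le0.
pose mu s := 1 - c s / c s0.
have mu_ge0 s : 0 <= mu s by rewrite subr_ge0 ler_pdivrMr // mul1r.
exists (fun j s => mu s * phi j s); split.
- apply: nonneg_rows_is_scheme => [j s|j].
    by rewrite mulr_ge0 //; case/andP: (bounds j s).
  under eq_bigr do rewrite mulrBl mul1r mulrAC.
  by rewrite sumrB -mulr_suml rel mul0r subr0 rows.
- by move=> j; rewrite /mu divff ?gt_eqF // subrr mul0r.
rewrite !revenueE; under [X in _ <= X]eq_bigr do rewrite signal_revenue_scale //.
set sig := \sum_s _ in sig_le0.
have -> : \sum_s mu s * signal_revenue (phi^~ s) =
    \sum_s signal_revenue (phi^~ s) - sig / c s0.
  by rewrite mulr_suml -sumrB; apply: eq_bigr => s _; rewrite mulrBl mul1r mulrAC.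
have : sig / c s0 <= 0 by rewrite pmulr_lle0 ?invr_gt0.
lra.
Qed.

Lemma drop_signal k (phi : 'I_m -> 'I_k.+1 -> R) : (m < k.+1)%N -> is_scheme phi ->
  exists phi' : 'I_m -> 'I_k -> R,
    is_scheme phi' /\ revenue p v phi <= revenue p v phi'.
Proof.
move=> m_lt_k phiS.
have [/existsP [s0 /forallP null]|] := boolP [exists s, [forall j, phi j s == 0]].
  have [phi'S <-] := drop_null_signal phiS (fun j => eqP (null j)).
  by exists (fun j s => phi j (lift s0 s)).
rewrite negb_exists => /forallP nonnull.
have col_neq0 s : exists j, phi j s != 0.
  by apply/existsP; move: (nonnull s); rewrite negb_forall.
pose sig c := \sum_s c s * signal_revenue (phi^~ s).
have [c [c_neq0 rel sig_le0]] : exists c : 'I_k.+1 -> R,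
    [/\ exists s, c s != 0, forall j, \sum_s c s * phi j s = 0 & sig c <= 0].
  have [c [[s cs] rel]] := exists_linear_relation (fun s j => phi j s) m_lt_k.
  have [sig_le0|sig_gt0] := lerP (sig c) 0; first by exists c; split => //; exists s.
  exists (fun s => - c s); split; first by exists s; rewrite oppr_eq0.
    by move=> j; under eq_bigr do rewrite mulNr; rewrite sumrN rel oppr0.
  by rewrite /sig; under eq_bigr do rewrite mulNr; rewrite sumrN oppr_le0 ltW.
have phi_ge0 j s : 0 <= phi j s by case: phiS => /(_ j s) /andP[].
have [s1 cs1_gt0] := linear_relation_pos_coef phi_ge0 col_neq0 c_neq0 rel.
have [s0 _ cs0_max] := @arg_maxP _ _ _ ord0 predT c isT.
have cs0_gt0 : 0 < c s0 by apply: lt_le_trans cs1_gt0 (cs0_max s1 isT).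
have [phi1 [phi1S null le_phi1]] :=
  shift_along_relation phiS rel cs0_gt0 (fun s => cs0_max s isT) sig_le0.
have [phi'S drop_phi1] := drop_null_signal phi1S null.
by exists (fun j s => phi1 j (lift s0 s)); rewrite drop_phi1.
Qed.

Lemma scheme_reduce k (phi : 'I_m -> 'I_k -> R) : is_scheme phi ->
  exists phi' : 'I_m -> 'I_m -> R,
    is_scheme phi' /\ revenue p v phi <= revenue p v phi'.
Proof.
elim: k phi => [|k IH] phi phiS.
  by have [phi' [phi'S <-]] := pad_scheme (leq0n m) phiS; exists phi'.
have [k_le_m|m_lt_k] := leqP k.+1 m.
  by have [phi' [phi'S <-]] := pad_scheme k_le_m phiS; exists phi'.
have [phi1 [phi1S le_phi1]] := drop_signal m_lt_k phiS.
have [phi' [phi'S le_phi']] := IH phi1 phi1S.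
by exists phi'; split => //; apply: le_trans le_phi1 le_phi'.
Qed.

End Reduction.

Lemma mx_coord_le_norm (R : realDomainType) a b (M : 'M[R]_(a, b)) i j :
  `|M i j| <= `|M|.
Proof.
rewrite [leRHS]/Num.norm /= mx_normrE; apply/bigmax_geP; right => /=.
by exists (i, j).
Qed.

Lemma lipschitz_continuous (R : realFieldType) (V : normedModType R) (F : V -> R) C :
  0 <= C -> (forall x y, `|F x - F y| <= C * `|x - y|) -> continuous F.
Proof.
move=> C_ge0 F_lip x; apply/cvgrPdist_lt => e e_gt0.
have C1_gt0 : 0 < C + 1 by lra.
near=> y; apply: le_lt_trans (F_lip x y) _.
apply: (@le_lt_trans _ _ ((C + 1) * `|x - y|)); first by rewrite ler_wpM2r //; lra.
rewrite mulrC -ltr_pdivlMr //; near: y.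
by apply: cvgr_dist_lt; [exact: cvg_id | rewrite divr_gt0].
Unshelve. all: by end_near.
Qed.

Section SchemeSpace.
Local Open Scope classical_set_scope.
Variables (R : realType) (m : nat).

(* Schemes with [m] signals, flattened into row vectors so that [rV_compact]
   applies. *)
Definition scheme_of_rV (V : 'rV[R]_(m * m)) : 'I_m -> 'I_m -> R :=
  fun j s => V ord0 (mxvec_index j s).

Lemma scheme_of_rV_mxvec (phi : 'I_m -> 'I_m -> R) j s :
  scheme_of_rV (mxvec (\matrix_(j, s) phi j s)) j s = phi j s.
Proof. by rewrite /scheme_of_rV mxvecE mxE. Qed.

Lemma scheme_of_rV_dist (V W : 'rV[R]_(m * m)) j s :
  `|scheme_of_rV V j s - scheme_of_rV W j s| <= `|V - W|.
Proof. by have := mx_coord_le_norm (V - W) ord0 (mxvec_index j s); rewrite !mxE. Qed.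

Definition schemes_rV := [set V | is_scheme (scheme_of_rV V)].

Lemma mxvec_scheme_in (phi : 'I_m -> 'I_m -> R) :
  is_scheme phi -> mxvec (\matrix_(j, s) phi j s) \in schemes_rV.
Proof.
move=> phiS; rewrite inE.
by apply: eq_is_scheme phiS => j s; rewrite scheme_of_rV_mxvec.
Qed.

Lemma continuous_row_sum j :
  continuous (fun V : 'rV[R]_(m * m) => \sum_s scheme_of_rV V j s).
Proof.
apply: (@lipschitz_continuous _ _ _ m%:R) => // V W.
rewrite -sumrB -[m in m%:R](card_ord m) mulr_natl -sumr_const.
apply: le_trans (ler_norm_sum _ _ _) _.
by apply: ler_sum => s _; apply: scheme_of_rV_dist.
Qed.

Lemma compact_schemes_rV : compact schemes_rV.
Proof.
have -> : schemes_rV =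
    [set V : 'rV_(m * m) | forall t, `[0, 1]%classic (V ord0 t)] `&`
    \bigcap_(j in setT) [set V | \sum_s scheme_of_rV V j s = 1].
  apply/seteqP; split => V /=.
  - move=> [bounds rows]; split => [t|j _]; last exact: rows.
    by case/mxvec_indexP: t => j s; rewrite in_itv /=; apply: bounds.
  - move=> [box rows]; split => [j s|j]; last exact: rows.
    by have := box (mxvec_index j s); rewrite in_itv.
apply: compact_closedI; first exact: (rV_compact (fun=> @segment_compact R 0 1)).
apply: (@closed_bigI _ _ setT) => j _.
apply: (@preimage_closed _ _ (fun V => \sum_s scheme_of_rV V j s) [set x | x = 1]).
- by move=> V _; apply: continuous_row_sum.
- exact: closed_eq.
Qed.

Lemma continuous_revenue_rV n (p : 'I_m -> R) (v : 'I_n -> 'I_m -> R) :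
  (2 <= n)%N -> (forall j, 0 <= p j) -> (forall i j, 0 <= v i j) ->
  continuous (fun V => revenue p v (scheme_of_rV V)).
Proof.
move=> n_ge2 p_ge0 v_ge0; pose psi i j := p j * v i j.
have psi_ge0 i j : 0 <= psi i j by rewrite mulr_ge0.
pose C := \sum_i \sum_j psi i j.
have C_ge0 : 0 <= C by do 2!apply: sumr_ge0 => ? _.
apply: (@lipschitz_continuous _ _ _ (m%:R * C)); first by rewrite mulr_ge0.
move=> V W; rewrite /revenue -sumrB -mulrA.
rewrite -[m in m%:R](card_ord m) mulr_natl -sumr_const.
apply: le_trans (ler_norm_sum _ _ _) _; apply: ler_sum => s _.
apply: max2_lipschitz => // i; rewrite -sumrB.
apply: le_trans (ler_norm_sum _ _ _) _.
apply: (@le_trans _ _ (\sum_j psi i j * `|V - W|)).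
  apply: ler_sum => j _; rewrite -mulrBr normrM ger0_norm ?psi_ge0 //.
  by rewrite ler_wpM2l ?psi_ge0 ?scheme_of_rV_dist.
rewrite -mulr_suml ler_wpM2r // /C (bigD1 i) //= lerDl.
by apply: sumr_ge0 => ? _; apply: sumr_ge0.
Qed.

End SchemeSpace.

Theorem mainTheorem2 (R : realType) (n m : nat) (hn : (2 <= n)%N)
  (p : 'I_m -> R) (v : 'I_n -> 'I_m -> R)
  (hp0 : forall j, 0 <= p j) (hp1 : \sum_(j < m) p j = 1)
  (hv : forall i j, 0 <= v i j) :
  exists (k : nat) (phi : 'I_m -> 'I_k -> R),
    (k <= m + minn 'C(n, 2) 'C(m, 2))%N /\ is_scheme phi /\
    forall (k' : nat) (phi' : 'I_m -> 'I_k' -> R),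
      is_scheme phi' -> revenue p v phi' <= revenue p v phi.
Proof.
have id_scheme : is_scheme (fun j s : 'I_m => (j == s)%:R : R).
  apply: nonneg_rows_is_scheme => [j s|j]; first exact: ler0n.
  by rewrite (bigD1 j) //= eqxx big1 ?addr0 // => s /negbTE; rewrite eq_sym => ->.
have nonempty : (@schemes_rV R m !=set0)%classic.
  by exists (mxvec (\matrix_(j, s) (j == s)%:R)); rewrite -inE mxvec_scheme_in.
have [V V_in V_max] := compact_EVT_max nonempty (@compact_schemes_rV R m)
  (continuous_subspaceT (continuous_revenue_rV hn hp0 hv)).
exists m, (scheme_of_rV V); split; first exact: leq_addr.
split=> [|k phi phiS]; first by rewrite inE in V_in.
have [phi' [phi'S le_phi']] := scheme_reduce hn p v phiS.
apply: le_trans le_phi' _; apply: le_trans (V_max _ (mxvec_scheme_in phi'S)).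
by rewrite (eq_revenue p v (scheme_of_rV_mxvec phi')).
Qed.
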